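(* For each $j$, if $\rho$ is a positive definite operator on $\mathcal H_{\mathcal S}$ then $\mathcal L_j(\rho)$ is positive definite. As a consequence, if for some $1\le j\le M$ the map $\mathcal L_{j,\zeta_j}$ is positivity improving, then so is $\mathcal L_{cy,\boldsymbol\zeta}$.
   Context: Finite-dimensional $\mathcal H_{\mathcal S},\mathcal H_{\mathcal E_j}$ ($j=1..M$), self-adjoint $H_{\mathcal S},H_{\mathcal E_j}$, self-adjoint $V_j$, $\tau_j>0$, $U_j=e^{-i\tau_j(H_{\mathcal S}\otimes\mathrm{Id}+\mathrm{Id}\otimes H_{\mathcal E_j}+V_j)}$; $\beta_{\rm ref}>0$, $\boldsymbol\zeta\in\mathbb R^M$, $\rho_{\mathcal E_j}$ the Gibbs state of $H_{\mathcal E_j}$ at $\beta_{\rm ref}-\zeta_j$; $\mathcal L_j=\mathcal L_{j,\zeta_j}$, $\mathcal L_j(\rho)=\mathrm{Tr}_{\mathcal H_{\mathcal E_j}}(U_j(\rho\otimes\rho_{\mathcal E_j})U_j^* )$; $\mathcal L_{cy,\boldsymbol\zeta}=\mathcal L_M\circ\cdots\circ\mathcal L_1$. Positivity improving: every nonzero positive operator is mapped to a positive definite operator. *)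

From HB Require Import structures.
From mathcomp Require Import all_boot all_algebra.
From mathcomp Require Import classical_sets reals topology normedtype sequences.
From mathcomp Require Export complex mxtens.
Set Implicit Arguments. Unset Strict Implicit. Unset Printing Implicit Defensive.
Import GRing.Theory Num.Theory numFieldNormedType.Exports.
Local Open Scope ring_scope.

Section QDefs.
Variable R : realType.
Local Notation C := (R[i]).

Definition adjmx m n (A : 'M[C]_(m, n)) : 'M[C]_(n, m) := map_mx (@conjc R) A^T.

Definition is_hermitian n (A : 'M[C]_n) : Prop := adjmx A = A.

Definition is_positive n (A : 'M[C]_n) : Prop :=
  is_hermitian A /\ forall x : 'cV[C]_n, 0 <= (adjmx x *m A *m x) 0 0.

Definition is_posdef n (A : 'M[C]_n) : Prop :=
  is_hermitian A /\ forall x : 'cV[C]_n, x != 0 -> 0 < (adjmx x *m A *m x) 0 0.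

Definition mexp_partial n (A : 'M[C]_n) (N : nat) : 'M[C]_n :=
  \sum_(k < N) ((k`!)%:R)^-1 *: A ^+ k.

Definition mexp n (A : 'M[C]_n) : 'M[C]_n :=
  \matrix_(i, j) Complex (limn (fun N => @complex.Re R (mexp_partial A N i j)))
                         (limn (fun N => @complex.Im R (mexp_partial A N i j))).

Definition gibbs n (beta : R) (H : 'M[C]_n) : 'M[C]_n :=
  (\tr (mexp (Complex (- beta) 0 *: H)))^-1 *: mexp (Complex (- beta) 0 *: H).

(* partial trace over the second tensor factor (consistent with tensmx) *)
Definition ptrace2 n m (X : 'M[C]_(n * m)) : 'M[C]_n :=
  \matrix_(i, j) \sum_(k < m) X (mxtens_index (i, k)) (mxtens_index (j, k)).

Definition coupling_unitary n m (HS : 'M[C]_n) (HE : 'M[C]_m) (V : 'M[C]_(n * m))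
  (tau : R) : 'M[C]_(n * m) :=
  mexp (Complex 0 (- tau) *: (HS *t (1%:M : 'M[C]_m) + (1%:M : 'M[C]_n) *t HE + V)).

Definition rep_channel n m (HS : 'M[C]_n) (HE : 'M[C]_m) (V : 'M[C]_(n * m))
  (tau beta : R) (rho : 'M[C]_n) : 'M[C]_n :=
  let U := coupling_unitary HS HE V tau in
  ptrace2 (U *m (rho *t gibbs beta HE) *m adjmx U).

Definition Lj n M (dE : 'I_M -> nat) (HS : 'M[C]_n)
  (HE : forall j : 'I_M, 'M[C]_(dE j)) (V : forall j : 'I_M, 'M[C]_(n * dE j))
  (tau : 'I_M -> R) (beta_ref : R) (zeta : 'I_M -> R) (j : 'I_M) : 'M[C]_n -> 'M[C]_n :=
  rep_channel HS (HE j) (V j) (tau j) (beta_ref - zeta j).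

(* L_cy = L_M o ... o L_1 (L_1 applied first) *)
Definition Lcy n M (L : 'I_M -> 'M[C]_n -> 'M[C]_n) (rho : 'M[C]_n) : 'M[C]_n :=
  foldl (fun r j => L j r) rho (enum 'I_M).

Definition positivity_improving n (f : 'M[C]_n -> 'M[C]_n) : Prop :=
  forall rho, is_positive rho -> rho != 0 -> is_posdef (f rho).

End QDefs.

Arguments Lj {R n M} dE HS HE V tau beta_ref zeta j rho.

(* Write the Gibbs state of the hermitian H_E as c Y^* Y with c > 0 and
   Y = exp(-beta H_E / 2) invertible; this needs exp(A) exp(B) = exp(A + B) for
   commuting A and B, which holds because the defect between the product of the
   truncated series and the truncated series of A + B is dominated entrywise,
   for column-sum bounds a and b of A and B, by the scalar defect
   exp_N(a) exp_N(b) - exp_N(a + b) -> 0.  Then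
     U (rho ⊗ rho_E) U^* = c W^* (rho ⊗ 1) W   with   W = (1 ⊗ Y) U^* invertible,
   so L_j(rho) is the partial trace of a positive multiple of a congruence of rho ⊗ 1.
   Each of these operations maps positive definite operators to positive definite
   ones, and nonzero positive operators to nonzero positive ones.  Along the cycle
   the state therefore stays nonzero positive up to the positivity improving
   factor, becomes positive definite there, and stays positive definite. *)

From mathcomp Require Import all_boot all_order all_algebra.
From mathcomp Require Import boolp reals topology normedtype sequences exp.
From mathcomp Require Import complex mxtens.
From mathcomp Require Import zify ring.
Set Implicit Arguments. Unset Strict Implicit. Unset Printing Implicit Defensive.
Import Order.TTheory GRing.Theory Num.Theory numFieldNormedType.Exports.
Local Open Scope classical_set_scope.
Local Open Scope ring_scope.

Lemma sum_triangle (V : nmodType) (N : nat) (F : nat -> nat -> V) :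
  \sum_(m < N) \sum_(k < m.+1) F k (m - k)%N =
  \sum_(k < N) \sum_(l < N | (k + l < N)%N) F k l.
Proof.
elim: N => [|N IH]; first by rewrite !big_ord0.
have widen k : \sum_(l < N.+1 | (k + l < N)%N) F k l = \sum_(l < N | (k + l < N)%N) F k l.
  rewrite big_mkcond big_ord_recr /= -big_mkcond; case: ifP => [|_]; [lia | exact: addr0].
have diag k : (k <= N)%N -> \sum_(l < N.+1 | (k + l == N)%N) F k l = F k (N - k)%N.
  move=> kN; have lt_Nk : (N - k < N.+1)%N by lia.
  by rewrite (big_pred1 (Ordinal lt_Nk)) // => l /=; rewrite -val_eqE /=; lia.
rewrite big_ord_recr /= IH.
(* Going from N to N.+1, both sides gain the antidiagonal [k + l = N]. *)
transitivity (\sum_(k < N.+1) \sum_(l < N.+1 | (k + l < N)%N) F k l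
              + \sum_(k < N.+1) \sum_(l < N.+1 | (k + l == N)%N) F k l); last first.
  rewrite -big_split; apply: eq_bigr => k _ /=.
  rewrite [RHS](bigID (fun l : 'I_N.+1 => (k + l < N)%N)) /=.
  by congr (_ + _); apply: eq_bigl => l; lia.
congr (_ + _).
  rewrite [RHS]big_ord_recr /= [X in _ + X]big_pred0 => [|l]; last by rewrite ltnNge leq_addr.
  by rewrite addr0; apply: eq_bigr => k _; rewrite widen.
by apply: eq_bigr => k _; rewrite diag // -ltnS.
Qed.

Lemma foldl_stable (T I : Type) (L : I -> T -> T) (P : T -> Prop) s x :
  (forall k y, P y -> P (L k y)) -> P x -> P (foldl (fun y k => L k y) x s).
Proof. by move=> PL; elim: s x => [|k s IH] x Px //=; apply/IH/PL. Qed.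

Lemma foldl_improving (T : Type) (I : eqType) (L : I -> T -> T) (P Q : T -> Prop) j s x :
  (forall k y, P y -> P (L k y)) -> (forall k y, Q y -> Q (L k y)) ->
  (forall y, P y -> Q (L j y)) -> j \in s -> P x -> Q (foldl (fun y k => L k y) x s).
Proof.
move=> PL QL PQj; elim: s x => [|k s IH] x //=; rewrite in_cons => /orP[/eqP <- | js] Px.
  exact: foldl_stable QL (PQj _ Px).
exact: IH js (PL _ _ Px).
Qed.

Section TruncatedExponential.
Variables (K : numFieldType) (V : algType K).

Definition inv_fact (k : nat) : K := (k`!)%:R^-1.

Definition exp_trunc (a : V) (N : nat) : V := \sum_(k < N) inv_fact k *: a ^+ k.

Lemma inv_fact_binom (m k : nat) : (k <= m)%N ->
  inv_fact m * 'C(m, k)%:R = inv_fact k * inv_fact (m - k).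
Proof.
move=> le_km; rewrite /inv_fact -(bin_fact le_km) !natrM !invfM mulrAC mulVf ?mul1r //.
by rewrite pnatr_eq0 -lt0n bin_gt0.
Qed.

Variables a b : V.
Hypothesis comm_ab : GRing.comm a b.

Lemma exp_truncD N : exp_trunc (a + b) N =
  \sum_(k < N) \sum_(l < N | (k + l < N)%N) (inv_fact k * inv_fact l) *: (a ^+ k * b ^+ l).
Proof.
rewrite -(sum_triangle _ (fun k l => (inv_fact k * inv_fact l) *: (a ^+ k * b ^+ l))).
apply: eq_bigr => m _.
rewrite addrC exprDn_comm; last exact/commr_sym.
rewrite scaler_sumr; apply: eq_bigr => k _.
rewrite -scaler_nat scalerA inv_fact_binom; last by rewrite -ltnS.
by congr (_ *: _); apply/commrX/commr_sym/commrX.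
Qed.

Lemma exp_truncM_sub_truncD N :
  exp_trunc a N * exp_trunc b N - exp_trunc (a + b) N =
  \sum_(k < N) \sum_(l < N | (N <= k + l)%N) (inv_fact k * inv_fact l) *: (a ^+ k * b ^+ l).
Proof.
rewrite exp_truncD /exp_trunc mulr_suml -sumrB; apply: eq_bigr => k _.
rewrite mulr_sumr; under eq_bigr do rewrite -scalerAl -scalerAr scalerA.
rewrite (bigID (fun l : 'I_N => (k + l < N)%N)) /= addrAC subrr add0r.
by apply: eq_bigl => l; rewrite -leqNgt.
Qed.

End TruncatedExponential.

Section ColumnSumBound.
Variable R : realType.
Local Notation C := R[i].
Local Notation Re := (@complex.Re R).
Local Notation Im := (@complex.Im R).

Lemma normC_real (x : R) : `|x%:C%C| = `|x|%:C%C :> C.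
Proof.
have [x_ge0|x_lt0] := ger0P x; first by rewrite ger0_norm // ler0c.
by rewrite -normrN -rmorphN ger0_norm // ler0c oppr_ge0 ltW.
Qed.

Lemma normC_ge_Im (z : C) : (`|Im z|)%:C%C <= `|z|.
Proof.
have := normc_ge_Re (z * 'i%C).
by rewrite ReiNIm normrN normrM complexiE normCi mulr1.
Qed.

Definition colsum_le n (X : 'M[C]_n) (r : R) := forall j, \sum_i `|X i j| <= r%:C%C.

Lemma colsum_le_entry n (X : 'M[C]_n) r i j : colsum_le X r -> `|X i j| <= r%:C%C.
Proof.
move=> /(_ j); apply: le_trans; rewrite (bigD1 i) //= lerDl.
by apply: sumr_ge0 => k _; apply: normr_ge0.
Qed.

Lemma colsum_le_exists n (X : 'M[C]_n) : exists2 r, 0 <= r & colsum_le X r.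
Proof.
pose S := \sum_j \sum_i `|X i j|.
have S_ge0 : 0 <= S by do 2!apply: sumr_ge0 => ? _.
have ReS : (Re S)%:C%C = S by apply/RRe_real/ger0_real.
exists (Re S); first by rewrite -ler0c ReS.
move=> j; rewrite ReS [leRHS](bigD1 j) //= lerDl.
by do 2!apply: sumr_ge0 => ? _.
Qed.

Lemma colsum_leD n (X Y : 'M[C]_n) r s :
  colsum_le X r -> colsum_le Y s -> colsum_le (X + Y) (r + s).
Proof.
move=> hX hY j; rewrite rmorphD; apply: le_trans (lerD (hX j) (hY j)).
by rewrite -big_split; apply: ler_sum => i _; rewrite mxE ler_normD.
Qed.

Lemma colsum_le_sum n (I : Type) (s : seq I) (P : pred I) (F : I -> 'M[C]_n) (G : I -> R) :
  (forall i, P i -> colsum_le (F i) (G i)) ->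
  colsum_le (\sum_(i <- s | P i) F i) (\sum_(i <- s | P i) G i).
Proof.
move=> le_FG; apply: (big_ind2 (fun X r => colsum_le X r)) => //.
  by move=> j; rewrite big1 ?rmorph0 // => i _; rewrite mxE normr0.
by move=> X1 r1 X2 r2; apply: colsum_leD.
Qed.

Lemma colsum_leZ n (X : 'M[C]_n) (x r : R) :
  colsum_le X r -> colsum_le (x%:C%C *: X) (`|x| * r).
Proof.
move=> hX j; under eq_bigr do rewrite mxE normrM normC_real.
by rewrite -mulr_sumr rmorphM ler_wpM2l ?ler0c.
Qed.

Lemma colsum_leM n (X Y : 'M[C]_n) r s : 0 <= r ->
  colsum_le X r -> colsum_le Y s -> colsum_le (X *m Y) (r * s).
Proof.
move=> r_ge0 hX hY j.
apply: le_trans (_ : \sum_i \sum_k `|X i k| * `|Y k j| <= _).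
  apply: ler_sum => i _; rewrite mxE; apply: le_trans (ler_norm_sum _ _ _) _.
  by apply: ler_sum => k _; rewrite normrM.
rewrite exchange_big /= rmorphM.
apply: le_trans (_ : \sum_k r%:C%C * `|Y k j| <= _).
  by apply: ler_sum => k _; rewrite -mulr_suml ler_wpM2r.
by rewrite -mulr_sumr ler_wpM2l ?ler0c.
Qed.

Lemma colsum_leX n (X : 'M[C]_n) r k : 0 <= r ->
  colsum_le X r -> colsum_le (X ^+ k) (r ^+ k).
Proof.
move=> r_ge0 hX; elim: k => [|k IH].
  move=> j; rewrite !expr0 rmorph1 (bigD1 j) //= big1 => [|i /negbTE ij].
    by rewrite mxE eqxx normr1 addr0.
  by rewrite mxE ij normr0.
by rewrite exprSr [r ^+ _]exprSr; apply: colsum_leM; rewrite ?exprn_ge0.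
Qed.

Lemma inv_factC k : inv_fact C k = (inv_fact R k)%:C%C.
Proof. by rewrite /inv_fact fmorphV rmorph_nat. Qed.

Lemma colsum_le_exp_trunc_defect n (A B : 'M[C]_n.+1) a b N :
  GRing.comm A B -> 0 <= a -> 0 <= b -> colsum_le A a -> colsum_le B b ->
  colsum_le (exp_trunc A N * exp_trunc B N - exp_trunc (A + B) N)
            (exp_trunc (a : R^o) N * exp_trunc b N - exp_trunc (a + b) N).
Proof.
move=> AB a_ge0 b_ge0 hA hB.
rewrite !exp_truncM_sub_truncD //; last exact: mulrC.
apply: colsum_le_sum => k _; apply: colsum_le_sum => l _.
have fact_ge0 : 0 <= inv_fact R k * inv_fact R l by rewrite mulr_ge0 ?invr_ge0.
rewrite !inv_factC -rmorphM.
have -> : (inv_fact R k * inv_fact R l) *: (a ^+ k * b ^+ l : R^o) =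
          `|inv_fact R k * inv_fact R l| * (a ^+ k * b ^+ l) by rewrite ger0_norm.
apply/colsum_leZ; rewrite -mulmxE.
by apply: colsum_leM; [exact: exprn_ge0 | exact: colsum_leX..].
Qed.

End ColumnSumBound.

Section ComplexConvergence.
Variable R : realType.
Local Notation C := R[i].
Local Notation Re := (@complex.Re R).
Local Notation Im := (@complex.Im R).

Definition cvgc (u : nat -> C) (z : C) :=
  (fun N => Re (u N)) @ \oo --> Re z /\ (fun N => Im (u N)) @ \oo --> Im z.

Lemma cvgc_unique u z w : cvgc u z -> cvgc u w -> z = w.
Proof.
case: z w => [a b] [c d] [/= ua ub] [/= uc ud].
by rewrite (cvg_unique (@Rhausdorff R) ua uc) (cvg_unique (@Rhausdorff R) ub ud).
Qed.

Lemma cvgc_cst z : cvgc (fun _ => z) z.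
Proof. by split; apply: cvg_cst. Qed.

Lemma ReD x y : Re (x + y) = Re x + Re y. Proof. by case: x y => [? ?] [? ?]. Qed.
Lemma ImD x y : Im (x + y) = Im x + Im y. Proof. by case: x y => [? ?] [? ?]. Qed.
Lemma ReB x y : Re (x - y) = Re x - Re y. Proof. by case: x y => [? ?] [? ?]. Qed.
Lemma ImB x y : Im (x - y) = Im x - Im y. Proof. by case: x y => [? ?] [? ?]. Qed.
Lemma ReM x y : Re (x * y) = Re x * Re y - Im x * Im y.
Proof. by case: x y => [? ?] [? ?]. Qed.
Lemma ImM x y : Im (x * y) = Re x * Im y + Im x * Re y.
Proof. by case: x y => [? ?] [? ?]. Qed.
Lemma ReJ x : Re x^*%C = Re x. Proof. by case: x. Qed.
Lemma ImJ x : Im x^*%C = - Im x. Proof. by case: x. Qed.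

Lemma cvgcD u v z w : cvgc u z -> cvgc v w -> cvgc (fun N => u N + v N) (z + w).
Proof.
move=> [uRe uIm] [vRe vIm]; rewrite /cvgc ReD ImD.
by split; [under eq_cvg do rewrite ReD | under eq_cvg do rewrite ImD]; apply: cvgD.
Qed.

Lemma cvgcM u v z w : cvgc u z -> cvgc v w -> cvgc (fun N => u N * v N) (z * w).
Proof.
move=> [uRe uIm] [vRe vIm]; rewrite /cvgc ReM ImM.
split; [under eq_cvg do rewrite ReM | under eq_cvg do rewrite ImM].
  by apply: cvgB; apply: cvgM.
by apply: cvgD; apply: cvgM.
Qed.

Lemma cvgcJ u z : cvgc u z -> cvgc (fun N => (u N)^*%C) z^*%C.
Proof.
move=> [uRe uIm]; rewrite /cvgc ReJ ImJ.
by split; [under eq_cvg do rewrite ReJ | under eq_cvg do rewrite ImJ; apply: cvgN].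
Qed.

Lemma eq_cvgc u v z : u =1 v -> cvgc u z = cvgc v z.
Proof. by move=> /funext ->. Qed.

Lemma cvgc_sum (I : Type) (s : seq I) (u : I -> nat -> C) (z : I -> C) :
  (forall i, cvgc (u i) (z i)) -> cvgc (fun N => \sum_(i <- s) u i N) (\sum_(i <- s) z i).
Proof.
move=> uz; elim: s => [|i s IH].
  by under eq_cvgc do rewrite big_nil; rewrite big_nil; apply: cvgc_cst.
by under eq_cvgc do rewrite big_cons; rewrite big_cons; apply: cvgcD.
Qed.

Lemma cvgc_squeeze u v z (e : nat -> R) : cvgc v z ->
  (forall N, `|u N - v N| <= (e N)%:C%C) -> e @ \oo --> 0 -> cvgc u z.
Proof.
move=> [vRe vIm] le_uv e0.
have eN : (fun N => - e N) @ \oo --> 0 by rewrite -oppr0; apply: cvgN.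
have squeeze (f : C -> R) : (forall x, (`|f x|)%:C%C <= `|x|) ->
    (fun N => f (u N - v N)) @ \oo --> 0.
  move=> le_f; apply: (squeeze_cvgr _ eN e0); apply: nearW => N.
  by rewrite -ler_norml -lecR (le_trans (le_f _)).
split.
  rewrite -[Re z]addr0; under eq_cvg => N do rewrite -(subrK (Re (v N)) (Re (u N))) -ReB addrC.
  by apply: cvgD => //; apply: squeeze; apply: normc_ge_Re.
rewrite -[Im z]addr0; under eq_cvg => N do rewrite -(subrK (Im (v N)) (Im (u N))) -ImB addrC.
by apply: cvgD => //; apply: squeeze; apply: normC_ge_Im.
Qed.

End ComplexConvergence.

Section Adjoint.
Variable R : realType.
Local Notation C := R[i].

Lemma adjmxE m n (A : 'M[C]_(m, n)) i j : adjmx A i j = (A j i)^*%C.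
Proof. by rewrite !mxE. Qed.

Lemma adjmxK m n (A : 'M[C]_(m, n)) : adjmx (adjmx A) = A.
Proof. by apply/matrixP => i j; rewrite !adjmxE conjcK. Qed.

Lemma adjmxD m n (A B : 'M[C]_(m, n)) : adjmx (A + B) = adjmx A + adjmx B.
Proof. by apply/matrixP => i j; rewrite !(adjmxE, mxE) rmorphD. Qed.

Lemma adjmxZ m n (c : C) (A : 'M[C]_(m, n)) : adjmx (c *: A) = c^*%C *: adjmx A.
Proof. by apply/matrixP => i j; rewrite !(adjmxE, mxE) rmorphM. Qed.

Lemma adjmxM m n p (A : 'M[C]_(m, n)) (B : 'M[C]_(n, p)) :
  adjmx (A *m B) = adjmx B *m adjmx A.
Proof. by rewrite /adjmx trmx_mul map_mxM. Qed.

Lemma adjmx1 n : adjmx (1%:M : 'M[C]_n) = 1%:M.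
Proof. by rewrite /adjmx trmx1 map_mx1. Qed.

Lemma adjmxX n (A : 'M[C]_n) k : adjmx (A ^+ k) = adjmx A ^+ k.
Proof.
elim: k => [|k IH]; first by rewrite !expr0 adjmx1.
by rewrite exprS exprSr -!mulmxE adjmxM IH.
Qed.

Lemma adjmx_tens m n p q (A : 'M[C]_(m, n)) (B : 'M[C]_(p, q)) :
  adjmx (A *t B) = adjmx A *t adjmx B.
Proof. by rewrite /adjmx trmx_tens map_mxT. Qed.

Lemma adjmx_unit n (A : 'M[C]_n) : (adjmx A \in unitmx) = (A \in unitmx).
Proof. by rewrite /adjmx map_unitmx unitmx_tr. Qed.

End Adjoint.

Section MatrixExponential.
Variable R : realType.
Local Notation C := R[i].
Local Notation Re := (@complex.Re R).
Local Notation Im := (@complex.Im R).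

Lemma is_cvg_series_exp_dominated (u : nat -> R) c : 0 <= c ->
  (forall k, `|u k| <= inv_fact R k * c ^+ k) -> cvgn (series u).
Proof.
move=> c_ge0 le_u; apply: (@normed_cvg R R^o).
apply: (series_le_cvg _ _ _ (is_cvg_series_exp_coeff c)) => k /=.
- exact: normr_ge0.
- exact: exp_coeff_ge0.
- by rewrite /exp_coeff /= mulrC; apply: le_u.
Qed.

Lemma exp_trunc_cvg (x : R) : exp_trunc (x : R^o) N @[N --> \oo] --> expR x.
Proof.
have -> : (fun N => exp_trunc (x : R^o) N) = series (exp_coeff x).
  by apply/funext => N; rewrite seriesEord; apply: eq_bigr => k _; rewrite /exp_coeff /= mulrC.
exact: is_cvg_series_exp_coeff.
Qed.

Lemma cvgc_mexp n (A : 'M[C]_n) i j :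
  cvgc (fun N => mexp_partial A N i j) (mexp A i j).
Proof.
have [c c_ge0 hA] := colsum_le_exists A.
have part_cvg (f : C -> R) : {morph f : x y / x + y} -> f 0 = 0 ->
    (forall (r : R) z, f (r%:C%C * z) = r * f z) -> (forall z, (`|f z|)%:C%C <= `|z|) ->
    cvgn (fun N => f (mexp_partial A N i j)).
  move=> fD f0 fZ le_f.
  have -> : (fun N => f (mexp_partial A N i j)) = series (fun k => inv_fact R k * f ((A ^+ k) i j)).
    apply/funext => N; rewrite seriesEord /mexp_partial summxE (big_morph f fD f0).
    by apply: eq_bigr => k _; rewrite mxE -/(inv_fact C k) inv_factC fZ.
  apply: (is_cvg_series_exp_dominated c_ge0) => k.
  rewrite normrM ger0_norm ?invr_ge0 // ler_wpM2l ?invr_ge0 // -lecR.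
  exact: le_trans (le_f _) (colsum_le_entry i j (colsum_leX k c_ge0 hA)).
rewrite mxE; split; apply: part_cvg => [||r [a b] /=|].
- exact: ReD.
- by [].
- by rewrite mul0r subr0.
- exact: normc_ge_Re.
- exact: ImD.
- by [].
- by rewrite mul0r addr0.
- exact: normC_ge_Im.
Qed.

Lemma mexp_partialE n (A : 'M[C]_n.+1) N : mexp_partial A N = exp_trunc A N.
Proof. by []. Qed.

Lemma mexp_add n (A B : 'M[C]_n) : A *m B = B *m A -> mexp A *m mexp B = mexp (A + B).
Proof.
case: n A B => [|n] A B AB; first by apply/matrixP => -[].
apply/matrixP => i j.
have [a a_ge0 hA] := colsum_le_exists A; have [b b_ge0 hB] := colsum_le_exists B.
have prod_cvg : cvgc (fun N => (mexp_partial A N *m mexp_partial B N) i j)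
                     ((mexp A *m mexp B) i j).
  rewrite mxE; under eq_cvgc do rewrite mxE.
  by apply: cvgc_sum => k; apply: cvgcM; apply: cvgc_mexp.
have defect_cvg :
    exp_trunc (a : R^o) N * exp_trunc b N - exp_trunc (a + b) N @[N --> \oo] --> 0.
  rewrite -(subrr (expR (a + b))) [X in X - _]expRD.
  by apply: cvgB; [apply: cvgM|]; apply: exp_trunc_cvg.
apply: cvgc_unique (cvgc_mexp (A + B) i j).
apply: cvgc_squeeze prod_cvg _ defect_cvg => N.
rewrite -normrN opprB !mexp_partialE.
apply: le_trans (colsum_le_entry i j (colsum_le_exp_trunc_defect N AB a_ge0 b_ge0 hA hB)).
by rewrite !mxE.
Qed.

Lemma mexp0 n : mexp (0 : 'M[C]_n) = 1%:M.
Proof.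
have partial0 N : mexp_partial (0 : 'M[C]_n) N.+1 = 1%:M.
  rewrite /mexp_partial big_ord_recl big1 => [|k _]; last by rewrite expr0n scaler0.
  by rewrite expr0 fact0 invr1 scale1r addr0.
apply/matrixP => i j; apply: cvgc_unique (cvgc_mexp 0 i j) _.
by split; apply: cvg_near_cst; exists 1%N => // N /= N_gt0; rewrite -(prednK N_gt0) partial0.
Qed.

Lemma mexp_unit n (A : 'M[C]_n) : mexp A \in unitmx.
Proof.
have commAN : A *m (- A) = (- A) *m A by rewrite mulmxN mulNmx.
have := mexp_add commAN; rewrite subrr mexp0 => /mulmx1_unit [unitA _].
exact: unitA.
Qed.

Lemma adjmx_mexp_partial n (A : 'M[C]_n) N :
  adjmx (mexp_partial A N) = mexp_partial (adjmx A) N.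
Proof.
apply/matrixP => i j; rewrite adjmxE /mexp_partial !summxE rmorph_sum.
apply: eq_bigr => k _; rewrite !mxE rmorphM -adjmxX adjmxE.
rewrite -/(inv_fact C k) inv_factC.
by congr (_ * _); apply: conjc_real.
Qed.

Lemma adjmx_mexp n (A : 'M[C]_n) : adjmx (mexp A) = mexp (adjmx A).
Proof.
apply/matrixP => i j; rewrite adjmxE.
apply: cvgc_unique (cvgcJ (cvgc_mexp A j i)) _.
under eq_cvgc do rewrite -adjmxE adjmx_mexp_partial.
exact: cvgc_mexp.
Qed.

End MatrixExponential.

Section Positivity.
Variable R : realType.
Local Notation C := R[i].

Definition qform n (A : 'M[C]_n) (x : 'cV[C]_n) : C := (adjmx x *m A *m x) 0 0.
Definition sform n (A : 'M[C]_n) (x y : 'cV[C]_n) : C := (adjmx x *m A *m y) 0 0.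

Lemma qformE n (A : 'M[C]_n) x :
  qform A x = \sum_i \sum_j (x i 0)^*%C * A i j * x j 0.
Proof.
rewrite /qform mxE exchange_big /=; apply: eq_bigr => j _.
by rewrite mxE mulr_suml; apply: eq_bigr => i _; rewrite adjmxE.
Qed.

Lemma qform0 n (A : 'M[C]_n) : qform A 0 = 0.
Proof. by rewrite /qform mulmx0 mxE. Qed.

Lemma hermitianE n (A : 'M[C]_n) i j : is_hermitian A -> A i j = (A j i)^*%C.
Proof. by move=> hA; rewrite -{1}hA adjmxE. Qed.

Lemma posdef_positive n (A : 'M[C]_n) : is_posdef A -> is_positive A.
Proof.
case=> hA A_gt0; split => // x.
by have [->|x_neq0] := eqVneq x 0; [rewrite -/(qform _ _) qform0 | exact: ltW (A_gt0 x x_neq0)].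
Qed.

Lemma posdef_sum_gt0 (I : finType) n (A : 'M[C]_n) (v : I -> 'cV[C]_n) k :
  is_posdef A -> v k != 0 -> 0 < \sum_l qform A (v l).
Proof.
move=> A_posdef vk_neq0; have [_ A_ge0] := posdef_positive A_posdef.
rewrite (bigD1 k) //= ltr_pwDl //; first exact: A_posdef.2.
by apply: sumr_ge0 => l _; apply: A_ge0.
Qed.

Lemma is_hermitian_congr m n (W : 'M[C]_(m, n)) (P : 'M[C]_m) :
  is_hermitian P -> is_hermitian (adjmx W *m P *m W).
Proof. by move=> hP; rewrite /is_hermitian !adjmxM adjmxK hP mulmxA. Qed.

Lemma qform_congr m n (W : 'M[C]_(m, n)) (P : 'M[C]_m) x :
  qform (adjmx W *m P *m W) x = qform P (W *m x).
Proof. by rewrite /qform adjmxM !mulmxA. Qed.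

Lemma is_positive_congr m n (W : 'M[C]_(m, n)) (P : 'M[C]_m) :
  is_positive P -> is_positive (adjmx W *m P *m W).
Proof.
case=> hP P_ge0; split; first exact: is_hermitian_congr.
by move=> x; rewrite -/(qform _ _) qform_congr; apply: P_ge0.
Qed.

Lemma is_posdef_congr n (W P : 'M[C]_n) : W \in unitmx ->
  is_posdef P -> is_posdef (adjmx W *m P *m W).
Proof.
move=> W_unit [hP P_gt0]; split; first exact: is_hermitian_congr.
move=> x x_neq0; rewrite -/(qform _ _) qform_congr; apply: P_gt0.
by apply: contra x_neq0 => /eqP Wx0; rewrite -(mulKmx W_unit x) Wx0 mulmx0.
Qed.

Lemma congr_eq0 n (W P : 'M[C]_n) : W \in unitmx ->
  (adjmx W *m P *m W == 0) = (P == 0).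
Proof.
move=> W_unit; apply/eqP/eqP => [|->]; last by rewrite mulmx0 mul0mx.
have W'_unit : adjmx W \in unitmx by rewrite adjmx_unit.
by move=> WPW0; rewrite -(mulKmx W'_unit P) -(mulmxK W_unit (adjmx W *m P)) WPW0 mul0mx mulmx0.
Qed.

Lemma conjc_ge0 (c : C) : 0 <= c -> c^*%C = c.
Proof. by case: c => a b /ger0_Im /= ->; rewrite oppr0. Qed.

Lemma is_hermitianZ n (c : C) (P : 'M[C]_n) : c^*%C = c ->
  is_hermitian P -> is_hermitian (c *: P).
Proof. by move=> c_real hP; rewrite /is_hermitian adjmxZ c_real hP. Qed.

Lemma qformZ n (c : C) (P : 'M[C]_n) x : qform (c *: P) x = c * qform P x.
Proof. by rewrite /qform -scalemxAr -scalemxAl mxE. Qed.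

Lemma is_positiveZ n (c : C) (P : 'M[C]_n) : 0 <= c ->
  is_positive P -> is_positive (c *: P).
Proof.
move=> c_ge0 [hP P_ge0]; split; first exact: is_hermitianZ (conjc_ge0 c_ge0) hP.
by move=> x; rewrite -/(qform _ _) qformZ mulr_ge0 //; apply: P_ge0.
Qed.

Lemma is_posdefZ n (c : C) (P : 'M[C]_n) : 0 < c ->
  is_posdef P -> is_posdef (c *: P).
Proof.
move=> c_gt0 [hP P_gt0]; split; first exact: is_hermitianZ (conjc_ge0 (ltW c_gt0)) hP.
by move=> x x_neq0; rewrite -/(qform _ _) qformZ mulr_gt0 //; apply: P_gt0.
Qed.

Lemma is_posdef1 n : is_posdef (1%:M : 'M[C]_n).
Proof.
split; first exact: adjmx1.
move=> x /matrix0Pn [i [j xij_neq0]]; rewrite -/(qform _ _) qformE.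
have row_sum k : \sum_l (x k 0)^*%C * (1%:M : 'M[C]_n) k l * x l 0 = x k 0 * (x k 0)^*%C.
  rewrite (bigD1 k) //= big1 => [|l /negbTE lk]; last by rewrite mxE eq_sym lk mulr0 mul0r.
  by rewrite mxE eqxx mulr1 addr0 mulrC.
rewrite (bigD1 i) //= row_sum ltr_pwDl ?mulcJ_ge0 //.
  by rewrite lt_def mulcJ_ge0 mulf_neq0 ?conjc_eq0 // -(ord1 j).
by apply: sumr_ge0 => k _; rewrite row_sum mulcJ_ge0.
Qed.

Lemma adjmx_delta n (p : 'I_n) : adjmx (delta_mx p 0 : 'cV[C]_n) = delta_mx 0 p.
Proof. by apply/matrixP => i j; rewrite adjmxE !mxE conjc_nat andbC. Qed.

Lemma sform_delta n (A : 'M[C]_n) p q : sform A (delta_mx p 0) (delta_mx q 0) = A p q.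
Proof. by rewrite /sform adjmx_delta -rowE -colE !mxE. Qed.

Lemma qform_delta n (A : 'M[C]_n) p : qform A (delta_mx p 0) = A p p.
Proof. exact: sform_delta. Qed.

Lemma delta_col_neq0 n (p : 'I_n) : delta_mx p 0 != 0 :> 'cV[C]_n.
Proof. by apply/matrix0Pn; exists p, 0; rewrite mxE !eqxx oner_neq0. Qed.

Lemma mxtrace_posdef_gt0 n (A : 'M[C]_n.+1) : is_posdef A -> 0 < \tr A.
Proof.
move=> A_posdef; rewrite /mxtrace; under eq_bigr do rewrite -qform_delta.
exact: (@posdef_sum_gt0 _ _ _ (fun l => delta_mx l 0) ord0 A_posdef (delta_col_neq0 ord0)).
Qed.

Lemma qformD n (A : 'M[C]_n) u w :
  qform A (u + w) = qform A u + sform A u w + sform A w u + qform A w.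
Proof.
rewrite /qform /sform adjmxD mulmxDl !mulmxDr !mulmxDl !mxE !addrA.
by congr (_ + _); apply: addrAC.
Qed.

Lemma sformZl n (A : 'M[C]_n) t u w : sform A (t *: u) w = t^*%C * sform A u w.
Proof. by rewrite /sform adjmxZ -!scalemxAl mxE. Qed.

Lemma sformZr n (A : 'M[C]_n) t u w : sform A u (t *: w) = t * sform A u w.
Proof. by rewrite /sform -scalemxAr mxE. Qed.

Lemma qformZr n (A : 'M[C]_n) t u : qform A (t *: u) = t^*%C * t * qform A u.
Proof. by rewrite /qform adjmxZ -!scalemxAl -scalemxAr !mxE mulrA. Qed.

Lemma is_positive_diag_eq0 n (A : 'M[C]_n) : is_positive A ->
  (forall p, A p p = 0) -> A = 0.
Proof.
case=> hA A_ge0 A_diag0; apply/matrixP => p q; rewrite mxE.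
set z := A p q.
have := A_ge0 (delta_mx p 0 + (- z^*%C) *: delta_mx q 0); rewrite -/(qform _ _).
rewrite qformD qformZr sformZl sformZr !sform_delta !qform_delta !A_diag0.
rewrite (hermitianE q p hA) -/z rmorphN /= conjcK mulr0 addr0 add0r.
have -> : - z^*%C * z + - z * z^*%C = - (z * z^*%C + z * z^*%C) by ring.
rewrite oppr_ge0 => zz_le0; have zz_ge0 := mulcJ_ge0 z.
have : z * z^*%C = 0 by apply/le_anti; rewrite zz_ge0 andbT (le_trans _ zz_le0) // lerDl.
by move/eqP; rewrite mulf_eq0 conjc_eq0 orbb => /eqP.
Qed.

End Positivity.

Section TensorAndPartialTrace.
Variable R : realType.
Local Notation C := R[i].

Lemma sum_mxtens_index (V : nmodType) n m (F : 'I_(n * m) -> V) :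
  \sum_p F p = \sum_(i < n) \sum_(k < m) F (mxtens_index (i, k)).
Proof.
rewrite pair_big /= (reindex (@mxtens_index n m)) /=; first by apply: eq_bigr => -[].
by exists (@mxtens_unindex n m) => p _; rewrite (mxtens_indexK, mxtens_unindexK).
Qed.

Definition tens_slice n m (k : 'I_m) (x : 'cV[C]_(n * m)) : 'cV[C]_n :=
  \col_i x (mxtens_index (i, k)) 0.

Lemma qform_tens1 n m (P : 'M[C]_n) x :
  qform (P *t (1%:M : 'M[C]_m)) x = \sum_k qform P (tens_slice k x).
Proof.
rewrite qformE sum_mxtens_index.
under eq_bigr => i _ do under eq_bigr => k _ do rewrite sum_mxtens_index.
rewrite exchange_big /=; apply: eq_bigr => k _; rewrite qformE.
apply: eq_bigr => i _; apply: eq_bigr => j _.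
rewrite (bigD1 k) //= big1 => [|l lk]; last by rewrite tensmxE !mxE eq_sym (negbTE lk) !mulr0 mul0r.
by rewrite tensmxE !mxE eqxx mulr1 addr0.
Qed.

Lemma is_hermitian_tens1 n m (P : 'M[C]_n) :
  is_hermitian P -> is_hermitian (P *t (1%:M : 'M[C]_m)).
Proof. by move=> hP; rewrite /is_hermitian adjmx_tens adjmx1 hP. Qed.

Lemma is_positive_tens1 n m (P : 'M[C]_n) :
  is_positive P -> is_positive (P *t (1%:M : 'M[C]_m)).
Proof.
case=> hP P_ge0; split; first exact: is_hermitian_tens1.
by move=> x; rewrite -/(qform _ _) qform_tens1; apply: sumr_ge0 => k _; apply: P_ge0.
Qed.

Lemma is_posdef_tens1 n m (P : 'M[C]_n) :
  is_posdef P -> is_posdef (P *t (1%:M : 'M[C]_m)).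
Proof.
move=> P_posdef; split; first exact: is_hermitian_tens1 P_posdef.1.
move=> x /matrix0Pn [p [z xpz_neq0]]; rewrite -/(qform _ _) qform_tens1.
case: (mxtens_indexP p) xpz_neq0 => i k xikz_neq0.
apply: (posdef_sum_gt0 (k := k)) P_posdef _.
by apply/matrix0Pn; exists i, 0; rewrite mxE -(ord1 z).
Qed.

Lemma tens1_neq0 n m (P : 'M[C]_n) : P != 0 -> P *t (1%:M : 'M[C]_m.+1) != 0.
Proof.
move=> /matrix0Pn [i [j Pij_neq0]]; apply/matrix0Pn.
by exists (mxtens_index (i, ord0)), (mxtens_index (j, ord0)); rewrite tensmxE !mxE eqxx mulr1.
Qed.

(* [tens_delta k x] is the column vector [x ⊗ e_k]. *)
Definition tens_delta n m (k : 'I_m) (x : 'cV[C]_n) : 'cV[C]_(n * m) :=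
  \col_p (x (mxtens_unindex p).1 0 * ((mxtens_unindex p).2 == k)%:R).

Lemma tens_deltaE n m (k : 'I_m) (x : 'cV[C]_n) i l :
  tens_delta k x (mxtens_index (i, l)) 0 = x i 0 * (l == k)%:R.
Proof. by rewrite mxE mxtens_indexK. Qed.

Lemma qform_ptrace2 n m (X : 'M[C]_(n * m)) x :
  qform (ptrace2 X) x = \sum_k qform X (tens_delta k x).
Proof.
transitivity (\sum_(k < m) \sum_i \sum_j
    (x i 0)^*%C * X (mxtens_index (i, k)) (mxtens_index (j, k)) * x j 0).
  rewrite qformE; symmetry; rewrite exchange_big /=; apply: eq_bigr => i _.
  rewrite exchange_big /=; apply: eq_bigr => j _.
  by rewrite mxE mulr_sumr mulr_suml.
apply: eq_bigr => k _; rewrite qformE sum_mxtens_index; apply: eq_bigr => i _.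
rewrite [RHS](bigD1 k) //= [X in _ + X]big1 => [|l lk]; last first.
  by apply: big1 => q _; rewrite tens_deltaE (negbTE lk) mulr0 rmorph0 !mul0r.
rewrite addr0 sum_mxtens_index; apply: eq_bigr => j _.
rewrite [RHS](bigD1 k) //= [X in _ + X]big1 => [|l lk]; last first.
  by rewrite !tens_deltaE (negbTE lk) !mulr0.
by rewrite !tens_deltaE eqxx !mulr1 addr0.
Qed.

Lemma is_hermitian_ptrace2 n m (X : 'M[C]_(n * m)) :
  is_hermitian X -> is_hermitian (ptrace2 X).
Proof.
move=> hX; apply/matrixP => i j; rewrite adjmxE !mxE rmorph_sum.
by apply: eq_bigr => k _; rewrite [RHS](hermitianE _ _ hX).
Qed.

Lemma is_positive_ptrace2 n m (X : 'M[C]_(n * m)) :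
  is_positive X -> is_positive (ptrace2 X).
Proof.
case=> hX X_ge0; split; first exact: is_hermitian_ptrace2.
by move=> x; rewrite -/(qform _ _) qform_ptrace2; apply: sumr_ge0 => k _; apply: X_ge0.
Qed.

Lemma is_posdef_ptrace2 n m (X : 'M[C]_(n * m.+1)) :
  is_posdef X -> is_posdef (ptrace2 X).
Proof.
move=> X_posdef; split; first exact: is_hermitian_ptrace2 X_posdef.1.
move=> x /matrix0Pn [i [z xiz_neq0]]; rewrite -/(qform _ _) qform_ptrace2.
apply: (posdef_sum_gt0 (k := ord0)) X_posdef _.
by apply/matrix0Pn; exists (mxtens_index (i, ord0)), 0; rewrite tens_deltaE eqxx mulr1 -(ord1 z).
Qed.

Lemma ptrace2_eq0 n m (X : 'M[C]_(n * m)) : is_positive X ->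
  (ptrace2 X == 0) = (X == 0).
Proof.
move=> X_ge0; apply/eqP/eqP => [trX0|->]; last first.
  by apply/matrixP => i j; rewrite !mxE big1 // => k _; rewrite mxE.
apply: is_positive_diag_eq0 => // p; case: (mxtens_indexP p) => i k.
have := congr1 (fun Y : 'M[C]_n => Y i i) trX0; rewrite !mxE => sum_diag0.
by apply: (psumr_eq0P _ sum_diag0) => // l _; rewrite -qform_delta; apply: X_ge0.2.
Qed.

Lemma tensmx11 (K : pzRingType) n m : (1%:M : 'M[K]_n) *t (1%:M : 'M[K]_m) = 1%:M.
Proof.
apply/matrixP => p q; case: (mxtens_indexP p) => i k; case: (mxtens_indexP q) => j l.
rewrite tensmxE !mxE (inj_eq (can_inj (@mxtens_indexK n m))) xpair_eqE.
by case: (i == j); case: (k == l); rewrite ?mulr1 ?mulr0.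
Qed.

Lemma tensmxZr (K : comPzRingType) n m p q (A : 'M[K]_(n, m)) c (B : 'M[K]_(p, q)) :
  A *t (c *: B) = c *: (A *t B).
Proof.
apply/matrixP => r s; case: (mxtens_indexP r) => i k; case: (mxtens_indexP s) => j l.
by rewrite tensmxE [RHS]mxE tensmxE mxE mulrCA.
Qed.

Lemma tens1mx_unit n m (Y : 'M[C]_m) : Y \in unitmx -> (1%:M : 'M[C]_n) *t Y \in unitmx.
Proof.
move=> unitY; have inv1Y : ((1%:M : 'M[C]_n) *t Y) *m (1%:M *t invmx Y) = 1%:M.
  by rewrite tensmx_mul mulmx1 (mulmxV unitY) tensmx11.
by have [] := mulmx1_unit inv1Y.
Qed.

Lemma tensmx_adj_mul n m (rho : 'M[C]_n) (Y : 'M[C]_m) :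
  rho *t (adjmx Y *m Y) = adjmx (1%:M *t Y) *m (rho *t 1%:M) *m (1%:M *t Y).
Proof. by rewrite adjmx_tens adjmx1 !tensmx_mul mul1mx !mulmx1. Qed.

End TensorAndPartialTrace.

Section RepeatedInteraction.
Variable R : realType.
Local Notation C := R[i].

Lemma mexp_hermitian_factor n (B : 'M[C]_n) : is_hermitian B ->
  mexp B = adjmx (mexp ((2%:R^-1)%:C%C *: B)) *m mexp ((2%:R^-1)%:C%C *: B).
Proof.
move=> hB; have hB2 := is_hermitianZ (conjc_real (2%:R^-1)) hB.
have halves : 2%:R^-1 + 2%:R^-1 = 1 :> R by rewrite [RHS](splitr 1) mul1r.
by rewrite adjmx_mexp hB2 (mexp_add (erefl _)) -scalerDl -rmorphD halves rmorph1 scale1r.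
Qed.

Lemma is_posdef_adjmx_mul n (Y : 'M[C]_n) : Y \in unitmx -> is_posdef (adjmx Y *m Y).
Proof. by move=> unitY; have := is_posdef_congr unitY (@is_posdef1 R n); rewrite mulmx1. Qed.

Lemma gibbs_factor m (beta : R) (H : 'M[C]_m.+1) : is_hermitian H ->
  exists2 Y, Y \in unitmx & exists2 c : C, 0 < c & gibbs beta H = c *: (adjmx Y *m Y).
Proof.
move=> hH; have hB : is_hermitian (Complex (- beta) 0 *: H).
  exact: is_hermitianZ (conjc_real (- beta)) hH.
set Y := mexp ((2%:R^-1)%:C%C *: (Complex (- beta) 0 *: H)).
exists Y; first exact: mexp_unit.
exists (\tr (adjmx Y *m Y))^-1.
  by rewrite invr_gt0; apply/mxtrace_posdef_gt0/is_posdef_adjmx_mul/mexp_unit.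
by rewrite /gibbs -(mexp_hermitian_factor hB).
Qed.

Lemma rep_channel_congr n m (HS : 'M[C]_n) (HE : 'M[C]_m.+1) (V : 'M[C]_(n * m.+1))
    tau beta :
  is_hermitian HE -> exists2 W, W \in unitmx & exists2 c : C, 0 < c &
    forall rho, rep_channel HS HE V tau beta rho =
                ptrace2 (c *: (adjmx W *m (rho *t (1%:M : 'M[C]_m.+1)) *m W)).
Proof.
move=> hHE; have [Y unitY [c c_gt0 gibbsE]] := gibbs_factor beta hHE.
set U := coupling_unitary HS HE V tau.
exists ((1%:M *t Y) *m adjmx U).
  by rewrite unitmx_mul tens1mx_unit // adjmx_unit mexp_unit.
exists c => // rho.
rewrite /rep_channel -/U gibbsE tensmxZr tensmx_adj_mul adjmxM adjmxK.
by rewrite -scalemxAr -scalemxAl !mulmxA.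
Qed.

Lemma rep_channel_posdef n m (HS : 'M[C]_n) (HE : 'M[C]_m.+1) (V : 'M[C]_(n * m.+1))
    tau beta rho :
  is_hermitian HE -> is_posdef rho -> is_posdef (rep_channel HS HE V tau beta rho).
Proof.
move=> hHE rho_posdef; have [W unitW [c c_gt0 ->]] := rep_channel_congr HS V tau beta hHE.
apply: is_posdef_ptrace2; apply: (is_posdefZ c_gt0).
exact: is_posdef_congr unitW (is_posdef_tens1 _ rho_posdef).
Qed.

Lemma rep_channel_positive n m (HS : 'M[C]_n) (HE : 'M[C]_m.+1) (V : 'M[C]_(n * m.+1))
    tau beta rho :
  is_hermitian HE -> is_positive rho -> rho != 0 ->
  is_positive (rep_channel HS HE V tau beta rho) /\ rep_channel HS HE V tau beta rho != 0.
Proof.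
move=> hHE rho_ge0 rho_neq0; have [W unitW [c c_gt0 ->]] := rep_channel_congr HS V tau beta hHE.
have X_ge0 : is_positive (c *: (adjmx W *m (rho *t (1%:M : 'M[C]_m.+1)) *m W)).
  exact: is_positiveZ (ltW c_gt0) (is_positive_congr W (is_positive_tens1 _ rho_ge0)).
split; first exact: is_positive_ptrace2.
by rewrite ptrace2_eq0 // scaler_eq0 gt_eqF //= congr_eq0 // tens1_neq0.
Qed.

End RepeatedInteraction.

Theorem mainTheorem8 (R : realType) (n M : nat) (dE : 'I_M -> nat)
  (HS : 'M[R[i]]_n) (HE : forall j : 'I_M, 'M[R[i]]_((dE j).+1))
  (V : forall j : 'I_M, 'M[R[i]]_(n * (dE j).+1))
  (tau : 'I_M -> R) (beta_ref : R) (zeta : 'I_M -> R) :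
  is_hermitian HS ->
  (forall j, is_hermitian (HE j)) ->
  (forall j, is_hermitian (V j)) ->
  (forall j, 0 < tau j) ->
  0 < beta_ref ->
  (forall (j : 'I_M) (rho : 'M[R[i]]_n),
      is_posdef rho -> is_posdef (Lj (fun j => (dE j).+1) HS HE V tau beta_ref zeta j rho)) /\
  ((exists j : 'I_M,
      positivity_improving (Lj (fun j => (dE j).+1) HS HE V tau beta_ref zeta j)) ->
   positivity_improving (Lcy (Lj (fun j => (dE j).+1) HS HE V tau beta_ref zeta))).
Proof.
move=> _ hHE _ _ _.
set L := Lj _ HS HE V tau beta_ref zeta.
have L_posdef j rho : is_posdef rho -> is_posdef (L j rho).
  exact: rep_channel_posdef (hHE j).
split; first exact: L_posdef.
move=> [j L_improving] rho rho_ge0 rho_neq0.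
apply: (foldl_improving (P := fun r => is_positive r /\ r != 0) (j := j)).
- by move=> k r [r_ge0 r_neq0]; apply: rep_channel_positive.
- exact: L_posdef.
- by move=> r [r_ge0 r_neq0]; apply: L_improving.
- exact: mem_enum.
- by split.
Qed.
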